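(* Every $K$-contact Lie algebroid of rank $3$ is Sasakian: if $E$ is a Lie algebroid of rank $3$ with a contact Riemannian structure $(F_E,\xi,\eta,g_E)$ such that $\xi$ is a Killing section of $g_E$, then the structure is normal, i.e. $N_{F_E}+2\,d_E\eta\otimes\xi=0$.
   Context: A Lie algebroid $(E,\rho_E,[\cdot,\cdot]_E)$ over $M$ is a vector bundle with anchor $\rho_E:E\to TM$ and Lie bracket on $\Gamma(E)$ with $[s_1,fs_2]_E=f[s_1,s_2]_E+\rho_E(s_1)(f)s_2$. For a 1-form $\eta$, $(d_E\eta)(s_1,s_2)=\frac12\{\rho_E(s_1)(\eta(s_2))-\rho_E(s_2)(\eta(s_1))-\eta([s_1,s_2]_E)\}$. For $E$ of rank $2m+1$, an almost contact Riemannian structure $(F_E,\xi,\eta,g_E)$: endomorphism $F_E$, $\xi\in\Gamma(E)$, $\eta\in\Gamma(E^* )$, bundle metric $g_E$ with $F_E^2=-I_E+\eta\otimes\xi$, $\eta(\xi)=1$, $g_E(F_Es_1,F_Es_2)=g_E(s_1,s_2)-\eta(s_1)\eta(s_2)$; fundamental form $\Omega_E(s_1,s_2)=g_E(s_1,F_Es_2)$. It is contact Riemannian if also $\eta\wedge(d_E\eta)^m$ vanishes nowhere and $d_E\eta=\Omega_E$. $\xi$ is Killing if $\rho_E(\xi)(g_E(s_1,s_2))-g_E([\xi,s_1]_E,s_2)-g_E(s_1,[\xi,s_2]_E)=0$; $K$-contact = contact Riemannian with $\xi$ Killing. $N_{F_E}(s_1,s_2)=[F_Es_1,F_Es_2]_E-F_E[F_Es_1,s_2]_E-F_E[s_1,F_Es_2]_E+F_E^2[s_1,s_2]_E$;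 Sasakian = contact Riemannian and normal ($N_{F_E}+2\,d_E\eta\otimes\xi=0$). *)

(* Lie algebroids over a manifold M, modelled through their
   smooth sections: fibres E p (finite-dimensional real vector spaces),
   a predicate of smooth functions on M and of smooth sections of E,
   anchor (acting as derivations on smooth functions) and bracket. *)
From HB Require Import structures.
From mathcomp Require Import all_boot all_order all_algebra.
From mathcomp Require Import reals.
Set Implicit Arguments.
Unset Strict Implicit.
Unset Printing Implicit Defensive.
Import Order.TTheory GRing.Theory Num.Theory.
Local Open Scope ring_scope.

Section LieAlgebroid.
Variables (R : realType) (M : Type) (E : M -> vectType R).

(* (not necessarily smooth) sections of E *)
Definition section := forall p : M, E p.
Definition sadd (s t : section) : section := fun p => s p + t p.
Definition sscale (f : M -> R) (s : section) : section := fun p => f p *: s p.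

Record lie_algebroid := LieAlgebroid {
  smoothf : (M -> R) -> Prop;
  smooths : section -> Prop;
  anchor : section -> (M -> R) -> (M -> R);
  lbr : section -> section -> section;
  smoothf_cst : forall c : R, smoothf (fun _ => c);
  smoothf_add : forall f h, smoothf f -> smoothf h -> smoothf (fun p => f p + h p);
  smoothf_mul : forall f h, smoothf f -> smoothf h -> smoothf (fun p => f p * h p);
  smooths_add : forall s t, smooths s -> smooths t -> smooths (sadd s t);
  smooths_scale : forall f s, smoothf f -> smooths s -> smooths (sscale f s);
  smooths_enough : forall p (v : E p), exists s, smooths s /\ s p = v;
  (* locality (holds for smooth vector bundles via local frames and bump
     functions): a smooth section vanishing at p is a finite combination of
     smooth sections with smooth coefficients vanishing at p *)
  smooths_local : forall p s, smooths s -> s p = 0 ->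
    exists n (f : 'I_n -> M -> R) (t : 'I_n -> section),
      (forall i, [/\ smoothf (f i), f i p = 0 & smooths (t i)]) /\
      s = (fun q => \sum_(i < n) f i q *: t i q);
  anchor_smooth : forall s f, smooths s -> smoothf f -> smoothf (anchor s f);
  anchor_add_s : forall s t f, smooths s -> smooths t -> smoothf f ->
    anchor (sadd s t) f = (fun p => anchor s f p + anchor t f p);
  anchor_scale_s : forall h s f, smoothf h -> smooths s -> smoothf f ->
    anchor (sscale h s) f = (fun p => h p * anchor s f p);
  anchor_add_f : forall s f h, smooths s -> smoothf f -> smoothf h ->
    anchor s (fun p => f p + h p) = (fun p => anchor s f p + anchor s h p);
  anchor_mul_f : forall s f h, smooths s -> smoothf f -> smoothf h ->
    anchor s (fun p => f p * h p) =
    (fun p => f p * anchor s h p + h p * anchor s f p);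
  lbr_smooth : forall s t, smooths s -> smooths t -> smooths (lbr s t);
  lbr_add_l : forall s t u, smooths s -> smooths t -> smooths u ->
    lbr (sadd s t) u = sadd (lbr s u) (lbr t u);
  lbr_scale_l : forall (c : R) s u, smooths s -> smooths u ->
    lbr (sscale (fun _ => c) s) u = sscale (fun _ => c) (lbr s u);
  lbr_anti : forall s t, smooths s -> smooths t ->
    lbr s t = (fun p => - lbr t s p);
  lbr_jacobi : forall s t u, smooths s -> smooths t -> smooths u ->
    sadd (lbr s (lbr t u)) (sadd (lbr t (lbr u s)) (lbr u (lbr s t)))
    = (fun p => 0);
  lbr_leibniz : forall s f t, smooths s -> smoothf f -> smooths t ->
    lbr s (sscale f t) = sadd (sscale f (lbr s t)) (sscale (anchor s f) t);
  (* anchor is a morphism of brackets (a consequence of the above) *)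
  anchor_hom : forall s t f, smooths s -> smooths t -> smoothf f ->
    anchor (lbr s t) f = (fun p => anchor s (anchor t f) p - anchor t (anchor s f) p)
}.

Variable L : lie_algebroid.

Record acr_structure := ACR {
  F : forall p, E p -> E p;
  xi : section;
  eta : forall p, E p -> R;
  g : forall p, E p -> E p -> R;
  F_linear : forall p (a : R) (u v : E p), F (a *: u + v) = a *: F u + F v;
  eta_linear : forall p (a : R) (u v : E p), eta (a *: u + v) = a * eta u + eta v;
  g_linear : forall p (a : R) (u v w : E p), g (a *: u + v) w = a * g u w + g v w;
  g_sym : forall p (u v : E p), g u v = g v u;
  g_pos : forall p (v : E p), v != 0 -> 0 < g v v;
  F_smooth : forall s, smooths L s -> smooths L (fun p => F (s p));
  xi_smooth : smooths L xi;
  eta_smooth : forall s, smooths L s -> smoothf L (fun p => eta (s p));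
  g_smooth : forall s t, smooths L s -> smooths L t ->
    smoothf L (fun p => g (s p) (t p));
  F2 : forall p (v : E p), F (F v) = - v + eta v *: xi p;
  eta_xi : forall p, eta (xi p) = 1;
  g_F : forall p (u v : E p), g (F u) (F v) = g u v - eta u * eta v
}.

Variable S : acr_structure.

Definition Fs (s : section) : section := fun p => F S (s p).
Definition etas (s : section) : M -> R := fun p => eta S (s p).
Definition gs (s t : section) : M -> R := fun p => g S (s p) (t p).

Definition Omega (s t : section) : M -> R := gs s (Fs t).

Definition d_eta (s t : section) : M -> R := fun p =>
  2^-1 * (anchor L s (etas t) p - anchor L t (etas s) p - etas (lbr L s t) p).

Definition eta_wedge_deta (s t u : section) : M -> R := fun p =>
  etas s p * d_eta t u p - etas t p * d_eta s u p + etas u p * d_eta s t p.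

Definition contact_riemannian3 : Prop :=
  (forall p, exists s t u, [/\ smooths L s, smooths L t, smooths L u &
                               eta_wedge_deta s t u p != 0]) /\
  (forall s t, smooths L s -> smooths L t -> d_eta s t = Omega s t).

Definition killing : Prop :=
  forall s t, smooths L s -> smooths L t ->
    (fun p => anchor L (xi S) (gs s t) p - gs (lbr L (xi S) s) t p
              - gs s (lbr L (xi S) t) p) = (fun _ => 0).

Definition K_contact3 : Prop := contact_riemannian3 /\ killing.

Definition nijenhuis (s t : section) : section := fun p =>
  lbr L (Fs s) (Fs t) p - Fs (lbr L (Fs s) t) p - Fs (lbr L s (Fs t)) p
  + Fs (Fs (lbr L s t)) p.

Definition normal : Prop :=
  forall s t, smooths L s -> smooths L t ->
    (fun p => nijenhuis s t p + (2 * d_eta s t p) *: xi S p) = (fun _ => 0).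

Definition sasakian3 : Prop := contact_riemannian3 /\ normal.

End LieAlgebroid.

(** Let T := N_F + 2 Omega (x) xi.  Under the contact condition d eta = Omega it is
    the obstruction to normality, and, Omega being tensorial, T is C^oo(M)-bilinear
    and skew, hence determined pointwise.  The Killing condition together with
    L_xi (d eta) = 0 gives [xi, F t] = F [xi, t], so T (xi, _) = 0.  Writing
    s = eta(s) xi + F (- F s) reduces T to pairs (F a, F b); in rank 3, at a point
    where F a <> 0, the fibre of ker eta is spanned by F a and F F a, and
    T (F a, F F a) = 0 by a direct computation. *)

From Pilot Require Import Defs.
From HB Require Import structures.
From mathcomp Require Import all_boot all_order all_algebra.
From mathcomp Require Import reals.
From mathcomp Require Import ring lra.
From Stdlib Require Import FunctionalExtensionality.
Set Implicit Arguments.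
Unset Strict Implicit.
Unset Printing Implicit Defensive.
Import Order.TTheory GRing.Theory Num.Theory.
Local Open Scope ring_scope.

Local Notation funext := functional_extensionality_dep.

Lemma eqN_eq0 (K : numFieldType) (V : lmodType K) (x : V) : x = - x -> x = 0.
Proof.
move=> xN; have : (2%:R : K) *: x == 0 by rewrite scaler_nat mulr2n {1}xN addNr.
by rewrite scaler_eq0 pnatr_eq0 => /eqP.
Qed.

Section Fibre.
Variables (R : realType) (M : Type) (E : M -> vectType R).
Variables (L : lie_algebroid E) (S : acr_structure L) (p : M).
Implicit Types (a : R) (u v w : E p).
Local Notation F := (Defs.F S).
Local Notation eta := (Defs.eta S).
Local Notation g := (Defs.g S).
Local Notation xi := (Defs.xi S p).

Lemma F0 : F (0 : E p) = 0.
Proof. by have := F_linear S (-1) (0 : E p) 0; rewrite scaler0 addr0 scaleN1r addNr. Qed.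
Lemma FD u v : F (u + v) = F u + F v.
Proof. by have := F_linear S 1 u v; rewrite !scale1r. Qed.
Lemma FZ a u : F (a *: u) = a *: F u.
Proof. by have := F_linear S a u 0; rewrite !addr0 F0 addr0. Qed.
Lemma FN u : F (- u) = - F u.
Proof. by rewrite -scaleN1r FZ scaleN1r. Qed.
Lemma FB u v : F (u - v) = F u - F v.
Proof. by rewrite FD FN. Qed.

Lemma eta0 : eta (0 : E p) = 0.
Proof. by have := eta_linear S (-1) (0 : E p) 0; rewrite scaler0 addr0 mulN1r addNr. Qed.
Lemma etaD u v : eta (u + v) = eta u + eta v.
Proof. by have := eta_linear S 1 u v; rewrite scale1r mul1r. Qed.
Lemma etaZ a u : eta (a *: u) = a * eta u.
Proof. by have := eta_linear S a u 0; rewrite !addr0 eta0 addr0. Qed.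
Lemma etaN u : eta (- u) = - eta u.
Proof. by rewrite -scaleN1r etaZ mulN1r. Qed.

Lemma g0l w : g (0 : E p) w = 0.
Proof. by have := g_linear S (-1) (0 : E p) 0 w; rewrite scaler0 addr0 mulN1r addNr. Qed.
Lemma gDl u v w : g (u + v) w = g u w + g v w.
Proof. by have := g_linear S 1 u v w; rewrite scale1r mul1r. Qed.
Lemma gZl a u w : g (a *: u) w = a * g u w.
Proof. by have := g_linear S a u 0 w; rewrite !addr0 g0l addr0. Qed.
Lemma g0r w : g w (0 : E p) = 0.
Proof. by rewrite g_sym g0l. Qed.
Lemma gDr u v w : g w (u + v) = g w u + g w v.
Proof. by rewrite !(g_sym S w) gDl. Qed.
Lemma gZr a u w : g w (a *: u) = a * g w u.
Proof. by rewrite !(g_sym S w) gZl. Qed.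
Lemma gNr u w : g w (- u) = - g w u.
Proof. by rewrite -scaleN1r gZr mulN1r. Qed.
Lemma gBr u v w : g w (u - v) = g w u - g w v.
Proof. by rewrite gDr gNr. Qed.

Lemma g_nondeg w : (forall v, g v w = 0) -> w = 0.
Proof.
move=> gw0; apply/eqP; apply: contraT => w_neq0.
by have := g_pos S w_neq0; rewrite gw0 ltxx.
Qed.

Lemma scale_xi_eq0 a : a *: xi = 0 -> a = 0.
Proof.
move=> /eqP; rewrite scaler_eq0 => /orP[/eqP //|/eqP xi0].
by have := eta_xi S p; rewrite xi0 eta0 => /esym/eqP; rewrite oner_eq0.
Qed.

Lemma F_xi : F xi = 0.
Proof.
set w := F xi.
have Fw0 : F w = 0 by rewrite /w F2 eta_xi scale1r addNr.
have w_line : w = eta w *: xi.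
  by have := F2 S w; rewrite Fw0 F0 => /eqP; rewrite eq_sym addrC subr_eq0 => /eqP ->.
suff eta_w0 : eta w = 0 by rewrite w_line eta_w0 scale0r.
have := congr1 (@Defs.F _ _ _ _ S p) w_line; rewrite Fw0 FZ -/w {2}w_line scalerA => /esym.
by move/scale_xi_eq0/eqP; rewrite mulf_eq0 orbb => /eqP.
Qed.

Lemma eta_F u : eta (F u) = 0.
Proof.
have FFFu : F (F (F u)) = - F u by rewrite (F2 S u) FD FN FZ F_xi scaler0 addr0.
by apply: scale_xi_eq0; apply: (addrI (- F u)); rewrite -F2 FFFu addr0.
Qed.

Lemma eta_gxi u : eta u = g u xi.
Proof. by have := g_F S u xi; rewrite F_xi g0r eta_xi mulr1 => /eqP; rewrite eq_sym subr_eq0 => /eqP. Qed.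

Lemma g_F_anti u v : g u (F v) = - g v (F u).
Proof.
have := g_F S v (F u); rewrite eta_F mulr0 subr0 F2 gDr gNr gZr -eta_gxi eta_F.
by rewrite mulr0 addr0 => <-; rewrite opprK g_sym.
Qed.

Lemma g_F_self u : g u (F u) = 0.
Proof. by have := g_F_anti u u; lra. Qed.

Lemma ker_eta_span u y : \dim (fullv : {vspace E p}) = 3%N ->
  u != 0 -> eta u = 0 -> eta y = 0 -> exists c d, y = c *: u + d *: F u.
Proof.
move=> dim3 u_neq0 eta_u eta_y.
have gu_gt0 : 0 < g u u := g_pos S u_neq0.
have Fu_neq0 : F u != 0.
  apply/eqP => Fu0; have := g_F S u u; rewrite Fu0 g0l eta_u mulr0 subr0 => gu0.
  by rewrite -gu0 ltxx in gu_gt0.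
have free3 : free [:: xi; u; F u].
  rewrite free_cons free_cons seq1_free Fu_neq0 andbT span_cons !span_seq1.
  apply/andP; split; apply/negP.
  - move=> /memv_addP[_ /vlineP[c ->] [_ /vlineP[d ->] xi_eq]].
    have := eta_xi S p; rewrite xi_eq etaD !etaZ eta_u eta_F !mulr0 addr0 => /eqP.
    by rewrite eq_sym oner_eq0.
  - move=> /vlineP[d u_eq].
    by move: gu_gt0; rewrite {2}u_eq gZr g_F_self mulr0 ltxx.
have span3 : <<[:: xi; u; F u]>>%VS = fullv.
  by apply: span_basis; rewrite basisEfree free3 subvf dim3.
have : y \in <<[:: xi; u; F u]>>%VS by rewrite span3 memvf.
rewrite span_cons span_cons span_seq1.
move=> /memv_addP[_ /vlineP[a ->] [_ /memv_addP[_ /vlineP[c ->] [_ /vlineP[d ->] ->]]] y_eq].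
exists c, d; have a0 : a = 0.
  by move: eta_y; rewrite y_eq !etaD !etaZ eta_xi eta_u eta_F !mulr0 !addr0 mulr1.
by rewrite y_eq a0 scale0r add0r.
Qed.

End Fibre.

Lemma alt_sum4D (V : zmodType) (a1 a2 b1 b2 c1 c2 d1 d2 : V) :
  (a1 + a2) - (b1 + b2) - (c1 + c2) + (d1 + d2) =
  (a1 - b1 - c1 + d1) + (a2 - b2 - c2 + d2).
Proof. by rewrite !opprD (addrACA a1) (addrACA (a1 - b1)) (addrACA (a1 - b1 - c1)). Qed.

Lemma alt_sum4_cancel (V : zmodType) (x1 x2 x3 x4 a b : V) :
  (x1 - a) - (x2 - b) - (x3 - a) + (x4 - b) = x1 - x2 - x3 + x4.
Proof.
rewrite !opprB -!addrA; congr (_ + _).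
rewrite (addrCA b) (addrCA (- a)); congr (_ + _).
rewrite (addrCA b) addKr (addrCA b); congr (_ + _).
by rewrite addrC addrNK.
Qed.

Section Algebroid.
Variables (R : realType) (M : Type) (E : M -> vectType R) (L : lie_algebroid E).
Implicit Types (s t : section E) (f h : M -> R).
Local Notation sm := (smooths L).
Local Notation sf := (smoothf L).
Local Notation br := (lbr L).
Local Notation an := (anchor L).

Lemma smooths0 s : sm s -> sm (fun _ => 0).
Proof.
move=> hs; have -> : (fun _ => 0) = sscale (fun _ => 0) s.
  by apply: funext => p; rewrite /sscale scale0r.
exact: smooths_scale (smoothf_cst L 0) hs.
Qed.

Lemma smooths_opp s : sm s -> sm (fun p => - s p).
Proof.
move=> hs; have -> : (fun p => - s p) = sscale (fun _ => -1) s.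
  by apply: funext => p; rewrite /sscale scaleN1r.
exact: smooths_scale (smoothf_cst L _) hs.
Qed.

Lemma smooths_sub s t : sm s -> sm t -> sm (fun p => s p - t p).
Proof. by move=> hs ht; apply: smooths_add hs (smooths_opp ht). Qed.

Lemma smoothf_sub f h : sf f -> sf h -> sf (fun p => f p - h p).
Proof.
move=> hf hh; apply: (smoothf_add hf).
have -> : (fun p => - h p) = (fun p => (fun _ => -1) p * h p).
  by apply: funext => p; rewrite mulN1r.
exact: smoothf_mul (smoothf_cst L _) hh.
Qed.

Lemma anchor0 s : sm s -> an s (fun _ => 0) = fun _ => 0.
Proof.
move=> hs; have h0 := smoothf_cst L 0; have := anchor_add_f hs h0 h0.
have -> : (fun _ : M => (0 : R) + 0) = fun _ => 0 by apply: funext => p; rewrite addr0.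
move=> a00; apply: funext => p; apply: (addrI (an s (fun _ => 0) p)).
by rewrite addr0 [in RHS]a00.
Qed.

Lemma anchor1 s : sm s -> an s (fun _ => 1) = fun _ => 0.
Proof.
move=> hs; have h1 := smoothf_cst L 1; have := anchor_mul_f hs h1 h1.
have -> : (fun _ : M => (1 : R) * 1) = fun _ => 1 by apply: funext => p; rewrite mulr1.
move=> a11; apply: funext => p; apply: (addrI (an s (fun _ => 1) p)).
by rewrite addr0 [in RHS]a11 /= !mul1r.
Qed.

Lemma anchor_sub s f h : sm s -> sf f -> sf h ->
  an s (fun p => f p - h p) = fun p => an s f p - an s h p.
Proof.
move=> hs hf hh; apply: funext => p.
have f_eq : f = (fun p => (fun q => f q - h q) p + h p) by apply: funext => q; rewrite subrK.
by rewrite {2}f_eq (anchor_add_f hs (smoothf_sub hf hh) hh) addrK.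
Qed.

Lemma anchor_half s h : sm s -> sf h ->
  an s (fun p => 2^-1 * h p) = fun p => 2^-1 * an s h p.
Proof.
move=> hs hh; set k := fun p => 2^-1 * h p.
have hk : sf k by exact: smoothf_mul (smoothf_cst L _) hh.
have h_eq : h = (fun p => k p + k p) by apply: funext => p; rewrite /k; field.
by apply: funext => p; rewrite {1}h_eq (anchor_add_f hs hk hk) /k; field.

Qed.

Lemma lbr_antiE s t p : sm s -> sm t -> br t s p = - br s t p.
Proof. by move=> hs ht; rewrite (lbr_anti ht hs). Qed.

Lemma lbr_self s p : sm s -> br s s p = 0.
Proof. by move=> hs; apply: eqN_eq0; apply: lbr_antiE. Qed.

Lemma lbr0l t : sm t -> br (fun _ => 0) t = fun _ => 0.
Proof.
move=> ht; have zero_eq : (fun _ => 0) = sscale (fun _ => 0) t.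
  by apply: funext => p; rewrite /sscale scale0r.
by rewrite {1}zero_eq lbr_scale_l //; apply: funext => p; rewrite /sscale scale0r.
Qed.

Lemma lbr_oppl s t : sm s -> sm t -> br (fun p => - s p) t = fun p => - br s t p.
Proof.
move=> hs ht; have -> : (fun p => - s p) = sscale (fun _ => -1) s.
  by apply: funext => p; rewrite /sscale scaleN1r.
by rewrite lbr_scale_l //; apply: funext => p; rewrite /sscale scaleN1r.
Qed.

Lemma lbr_oppr s t : sm s -> sm t -> br s (fun p => - t p) = fun p => - br s t p.
Proof.
move=> hs ht; apply: funext => p.
by rewrite (lbr_antiE p (smooths_opp ht) hs) lbr_oppl // opprK lbr_antiE.
Qed.

Lemma lbr_scalel s t f : sm s -> sm t -> sf f ->
  br (sscale f s) t = fun p => f p *: br s t p - an t f p *: s p.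
Proof.
move=> hs ht hf; apply: funext => p.
rewrite (lbr_antiE p ht (smooths_scale hf hs)) lbr_leibniz // /sadd /sscale.
by rewrite (lbr_antiE p hs ht) opprD scalerN opprK.
Qed.

End Algebroid.

Section NormalityTensor.
Variables (R : realType) (M : Type) (E : M -> vectType R).
Variables (L : lie_algebroid E) (S : acr_structure L).
Implicit Types (s t u : section E) (f : M -> R).
Local Notation sm := (smooths L).
Local Notation sf := (smoothf L).
Local Notation br := (lbr L).
Local Notation an := (anchor L).
Local Notation xi := (xi S).
Local Notation Fs := (Fs S).

Lemma smooths_sum n (f : 'I_n -> M -> R) (t : 'I_n -> section E) :
  (forall i, sf (f i)) -> (forall i, sm (t i)) ->
  sm (fun p => \sum_(i < n) f i p *: t i p).
Proof.
elim: n f t => [|n IHn] f t hf ht.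
  have -> : (fun p => \sum_(i < 0) f i p *: t i p) = fun _ => 0.
    by apply: funext => p; rewrite big_ord0.
  exact: smooths0 (xi_smooth S).
have -> : (fun p => \sum_(i < n.+1) f i p *: t i p) =
    sadd (sscale (f ord0) (t ord0))
         (fun p => \sum_(i < n) f (lift ord0 i) p *: t (lift ord0 i) p).
  by apply: funext => p; rewrite big_ord_recl.
by apply: smooths_add; [apply: smooths_scale | apply: IHn].
Qed.

(* [N_F + 2 d_E eta (x) xi] with [d_E eta] replaced by [Omega]: the two agree on
   contact structures, and only the latter is C^oo(M)-bilinear. *)
Definition normality_tensor s t : section E :=
  fun p => nijenhuis S s t p + (2 * Omega S s t p) *: xi p.
Local Notation T := normality_tensor.

Lemma normality_tensorDl s1 s2 t p : sm s1 -> sm s2 -> sm t ->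
  T (sadd s1 s2) t p = T s1 t p + T s2 t p.
Proof.
move=> h1 h2 ht; have Fs_add : Fs (sadd s1 s2) = sadd (Fs s1) (Fs s2).
  by apply: funext => q; rewrite /Fs /sadd FD.
rewrite /T /nijenhuis Fs_add.
rewrite (lbr_add_l (F_smooth S h1) (F_smooth S h2) (F_smooth S ht)).
rewrite (lbr_add_l (F_smooth S h1) (F_smooth S h2) ht).
rewrite (lbr_add_l h1 h2 (F_smooth S ht)) (lbr_add_l h1 h2 ht).
rewrite /Omega /gs /Fs /sadd !FD alt_sum4D gDl mulrDr scalerDl.
by rewrite addrACA.
Qed.

Lemma normality_tensorZl f s t p : sf f -> sm s -> sm t ->
  T (sscale f s) t p = f p *: T s t p.
Proof.
move=> hf hs ht; have Fs_scale : Fs (sscale f s) = sscale f (Fs s).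
  by apply: funext => q; rewrite /Fs /sscale FZ.
rewrite /T /nijenhuis Fs_scale.
rewrite (lbr_scalel (F_smooth S hs) (F_smooth S ht) hf) (lbr_scalel (F_smooth S hs) ht hf).
rewrite (lbr_scalel hs (F_smooth S ht) hf) (lbr_scalel hs ht hf).
rewrite /Omega /gs /Fs /sscale !FB !FZ alt_sum4_cancel gZl.
by rewrite !(scalerDr, scalerN) scalerA mulrCA.
Qed.

Lemma normality_tensor_anti s t p : sm s -> sm t -> T t s p = - T s t p.
Proof.
move=> hs ht; rewrite /T /nijenhuis.
rewrite (lbr_antiE p (F_smooth S hs) (F_smooth S ht)).
rewrite /Fs (lbr_antiE _ hs (F_smooth S ht)) (lbr_antiE _ (F_smooth S hs) ht).
rewrite (lbr_antiE _ hs ht) /Omega /gs g_F_anti !FN mulrN scaleNr.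
rewrite !opprD !opprK; congr (_ + _).
by rewrite -!addrA; congr (_ + _); rewrite addrCA; congr (_ + _); rewrite addrC.
Qed.

Lemma normality_tensor_self s p : sm s -> T s s p = 0.
Proof. by move=> hs; apply: eqN_eq0; apply: normality_tensor_anti. Qed.

Lemma normality_tensor_sum n (f : 'I_n -> M -> R) (t : 'I_n -> section E) u p :
  (forall i, sf (f i)) -> (forall i, sm (t i)) -> sm u ->
  T (fun q => \sum_(i < n) f i q *: t i q) u p = \sum_(i < n) f i p *: T (t i) u p.
Proof.
elim: n f t => [|n IHn] f t hf ht hu.
  have -> : (fun q => \sum_(i < 0) f i q *: t i q) = sscale (fun _ => 0) xi.
    by apply: funext => q; rewrite big_ord0 /sscale scale0r.
  by rewrite normality_tensorZl ?scale0r ?big_ord0 //; [exact: smoothf_cst | exact: xi_smooth].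
have -> : (fun q => \sum_(i < n.+1) f i q *: t i q) =
    sadd (sscale (f ord0) (t ord0))
         (fun q => \sum_(i < n) f (lift ord0 i) q *: t (lift ord0 i) q).
  by apply: funext => q; rewrite big_ord_recl.
rewrite normality_tensorDl ?normality_tensorZl ?IHn ?big_ord_recl //.
  exact: smooths_scale.
exact: smooths_sum.
Qed.

Lemma normality_tensor_local s u p : sm s -> sm u -> s p = 0 -> T s u p = 0.
Proof.
move=> hs hu sp0; have [n [f [t [hft ->]]]] := smooths_local hs sp0.
have hf i : sf (f i) by have [] := hft i.
have ht i : sm (t i) by have [] := hft i.
rewrite normality_tensor_sum //.
by apply: big1 => i _; have [_ -> _] := hft i; rewrite scale0r.
Qed.

Lemma normality_tensor_eql s1 s2 u p : sm s1 -> sm s2 -> sm u ->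
  s1 p = s2 p -> T s1 u p = T s2 u p.
Proof.
move=> h1 h2 hu e.
have -> : s1 = sadd s2 (fun q => s1 q - s2 q) by apply: funext => q; rewrite /sadd addrC subrK.
rewrite normality_tensorDl //; last exact: smooths_sub.
by rewrite (normality_tensor_local (smooths_sub h1 h2) hu) ?addr0 // e subrr.
Qed.

Lemma normality_tensor_eqr s u1 u2 p : sm s -> sm u1 -> sm u2 ->
  u1 p = u2 p -> T s u1 p = T s u2 p.
Proof.
move=> hs h1 h2 e.
by rewrite -(opprK (T s u1 p)) -normality_tensor_anti // (normality_tensor_eql h1 h2 hs e)
  normality_tensor_anti ?opprK.
Qed.

Section ContactMetric.

Hypothesis d_eta_Omega : forall s t, sm s -> sm t -> d_eta S s t = Omega S s t.

Lemma anchor_xi_eta s : sm s -> an xi (etas S s) = etas S (br xi s).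
Proof.
move=> hs; apply: funext => p.
have := congr1 (fun k => k p) (d_eta_Omega (xi_smooth S) hs).
have eta_xi1 : etas S xi = fun _ => 1 by apply: funext => q; rewrite /etas eta_xi.
rewrite /= /Omega /gs /Fs g_sym -eta_gxi eta_F /d_eta eta_xi1 anchor1 // subr0.
by move/eqP; rewrite mulf_eq0 invr_eq0 pnatr_eq0 /= subr_eq0 => /eqP.
Qed.

Lemma anchor_xi_d_eta s t p : sm s -> sm t ->
  an xi (d_eta S s t) p = d_eta S (br xi s) t p + d_eta S s (br xi t) p.
Proof.
move=> hs ht; have hxi := xi_smooth S.
have sm_st : smoothf L (an s (etas S t)) by apply: anchor_smooth => //; exact: eta_smooth.
have sm_ts : smoothf L (an t (etas S s)) by apply: anchor_smooth => //; exact: eta_smooth.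
have sm_br : smoothf L (etas S (br s t)) by apply: eta_smooth; exact: lbr_smooth.
rewrite [d_eta S s t]/d_eta anchor_half //; last by do 2 apply: smoothf_sub => //.
rewrite anchor_sub //; last exact: smoothf_sub.
rewrite anchor_sub //.
have an_st : an xi (an s (etas S t)) p = an (br xi s) (etas S t) p + an s (etas S (br xi t)) p.
  have := congr1 (fun k => k p) (anchor_hom hxi hs (eta_smooth S ht)).
  by rewrite /= anchor_xi_eta // => ->; rewrite subrK.
have an_ts : an xi (an t (etas S s)) p = an (br xi t) (etas S s) p + an t (etas S (br xi s)) p.
  have := congr1 (fun k => k p) (anchor_hom hxi ht (eta_smooth S hs)).
  by rewrite /= anchor_xi_eta // => ->; rewrite subrK.
have an_br : an xi (etas S (br s t)) p =
    etas S (br (br xi s) t) p + etas S (br s (br xi t)) p.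
  rewrite anchor_xi_eta; last exact: lbr_smooth.
  have := congr1 (fun k => Defs.eta S (k p)) (lbr_jacobi hxi hs ht).
  rewrite /sadd (lbr_anti ht hxi) lbr_oppr //; last exact: lbr_smooth.
  rewrite (lbr_antiE p (lbr_smooth hxi hs) ht).
  rewrite /etas !etaD !etaN eta0 => h.
  lra.
rewrite an_st an_ts an_br /d_eta; ring.
Qed.

Hypothesis xi_killing : killing S.

(* [g (s, [xi, F t] - F [xi, t]) = (L_xi g)(s, F t) - (L_xi d eta)(s, t) = 0]. *)
Lemma lbr_xi_F t p : sm t -> br xi (Fs t) p = F S (br xi t p).
Proof.
move=> ht; have hxi := xi_smooth S.
apply/eqP; rewrite -subr_eq0; apply/eqP; apply: (g_nondeg (S := S)) => v.
have [s [hs <-]] := smooths_enough L v.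
have := congr1 (fun k => k p) (xi_killing hs (F_smooth S ht)).
have e1 : gs S s (Fs t) = d_eta S s t by rewrite (d_eta_Omega hs ht).
have e2 : gs S (br xi s) (Fs t) p = d_eta S (br xi s) t p.
  by rewrite (d_eta_Omega (lbr_smooth hxi hs) ht).
have e3 : g S (s p) (F S (br xi t p)) = d_eta S s (br xi t) p.
  by rewrite (d_eta_Omega hs (lbr_smooth hxi ht)).
rewrite /= gBr e1 e2 e3 anchor_xi_d_eta // /gs.
lra.
Qed.

Lemma normality_tensor_xi t p : sm t -> T xi t p = 0.
Proof.
move=> ht; have Fxi0 : Fs xi = fun _ => 0 by apply: funext => q; rewrite /Fs F_xi.
rewrite /normality_tensor /nijenhuis Fxi0 (lbr0l (F_smooth S ht)) (lbr0l ht) /Fs F0 lbr_xi_F //.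
by rewrite /Omega /gs /Fs g_sym -eta_gxi eta_F mulr0 scale0r addr0 subrr sub0r addNr.
Qed.

Lemma normality_tensor_F_FF a p : sm a -> T (Fs a) (Fs (Fs a)) p = 0.
Proof.
move=> ha; have hFa := F_smooth S ha; have hFFa := F_smooth S hFa.
have FFFa : Fs (Fs (Fs a)) = fun q => - Fs a q.
  by apply: funext => q; rewrite /Fs (F2 S (F S (a q))) eta_F scale0r addr0.
have eta_Fa : etas S (Fs a) = fun _ => 0 by apply: funext => q; rewrite /etas /Fs eta_F.
have eta_FFa : etas S (Fs (Fs a)) = fun _ => 0 by apply: funext => q; rewrite /etas /Fs eta_F.
rewrite /normality_tensor -(d_eta_Omega hFa hFFa) /nijenhuis FFFa.
rewrite lbr_oppr // lbr_oppr // (lbr_antiE p hFa hFFa) opprK.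
rewrite /Fs !lbr_self // oppr0 F0 !subr0 F2.
rewrite /d_eta eta_Fa eta_FFa !anchor0 // /etas.
have halve x : 2 * (2^-1 * (0 - 0 - x)) = - x :> R by field.
by rewrite halve scaleNr addNKr subrr.
Qed.

Lemma normality_tensor_reduce_F s t p : sm s -> sm t ->
  exists a, sm a /\ T s t p = T (Fs a) t p.
Proof.
move=> hs ht; set a := sscale (fun _ => -1) (Fs s).
have ha : sm a by apply: smooths_scale (smoothf_cst L _) (F_smooth S hs).
exists a; split => //.
have s_eq : s = sadd (sscale (etas S s) xi) (Fs a).
  apply: funext => q; rewrite /a /sadd /sscale /Fs scaleN1r FN F2.
  by rewrite /etas opprD opprK addrCA subrr addr0.
have hsxi : sm (sscale (etas S s) xi) by exact: smooths_scale (eta_smooth S hs) (xi_smooth S).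
have hFa : sm (Fs a) := F_smooth S ha.
rewrite {1}s_eq normality_tensorDl // normality_tensorZl ?normality_tensor_xi ?scaler0 ?add0r //.
  exact: eta_smooth.
exact: xi_smooth.
Qed.

Lemma normality_tensor_eq0 s t p : \dim (fullv : {vspace E p}) = 3%N ->
  sm s -> sm t -> T s t p = 0.
Proof.
move=> dim3 hs ht.
have [a [ha ->]] := normality_tensor_reduce_F p hs ht.
have hFa := F_smooth S ha.
rewrite -(opprK (T (Fs a) t p)) -normality_tensor_anti //.
have [b [hb ->]] := normality_tensor_reduce_F p ht hFa.
have hFb := F_smooth S hb.
rewrite normality_tensor_anti // opprK.
have [Fa0|Fa_neq0] := eqVneq (Fs a p) 0; first exact: normality_tensor_local.
have [c [d Fb_eq]] := ker_eta_span dim3 Fa_neq0 (eta_F S _) (eta_F S (b p)).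
set w := sadd (sscale (fun _ => c) (Fs a)) (sscale (fun _ => d) (Fs (Fs a))).
have hFFa := F_smooth S hFa.
have hcw := smooths_scale (smoothf_cst L c) hFa.
have hdw := smooths_scale (smoothf_cst L d) hFFa.
have hw : sm w := smooths_add hcw hdw.
rewrite (normality_tensor_eqr hFa hFb hw Fb_eq) -(opprK (T (Fs a) w p)).
rewrite -normality_tensor_anti // normality_tensorDl //.
rewrite (normality_tensorZl p (smoothf_cst L c)) // (normality_tensorZl p (smoothf_cst L d)) //.
rewrite normality_tensor_self // normality_tensor_anti // normality_tensor_F_FF //.
by rewrite !(scaler0, oppr0, addr0).
Qed.

End ContactMetric.

End NormalityTensor.

Theorem proposition4p9 (R : realType) (M : Type) (E : M -> vectType R)
  (L : lie_algebroid E) (S : acr_structure L) :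
  (forall p : M, \dim (fullv : {vspace E p}) = 3%N) ->
  K_contact3 S -> sasakian3 S.
Proof.
move=> dim3 [[eta_nondeg d_eta_Omega] xi_killing]; split; first by split.
move=> s t hs ht; apply: funext => p /=; rewrite d_eta_Omega //.
by apply: (normality_tensor_eq0 d_eta_Omega xi_killing (dim3 p)).
Qed.
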